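(* Let $(\Omega,\mathcal F,\mathbb P)$ be a probability space with a measurable action $\{\theta_x\}_{x\in\mathbb R^{2d}}$ under which $\mathbb P$ is invariant, and let $v(x,\omega)=\hat v(\theta_x\omega)$ be a stationary process with $\hat v$ measurable and $\mathbb E|\hat v|<\infty$. For $\ell=(\ell_1,\dots,\ell_{2d})$ with $\ell_i>0$ put $I(\ell)=\prod_{i=1}^{2d}[-\ell_i,\ell_i]$. Then for $\mathbb P$-almost every $\omega$ there is a sequence $\ell^r=(\ell^r_1,\dots,\ell^r_{2d})$ with $\ell^r_i\to\infty$ as $r\to\infty$ for each $i$, such that $$\sup_r\ \sigma(\partial I(\ell^r))^{-1}\int_{\partial I(\ell^r)}|v(x,\omega)|\,\sigma(dx)<\infty,$$ where $\sigma$ is the $(2d-1)$-dimensional surface measure. *)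

From HB Require Import structures.
From mathcomp Require Import all_boot all_order all_algebra.
From mathcomp Require Import all_classical all_reals all_analysis.

Set Implicit Arguments.
Unset Strict Implicit.
Unset Printing Implicit Defensive.

Import Order.TTheory GRing.Theory Num.Theory.
Local Open Scope classical_set_scope.
Local Open Scope ring_scope.

(* Points of R^n are n-tuples of reals; n.-tuple R carries the product
   (= Borel) sigma-algebra from measurable_structure.v. *)

Definition tzero (R : realType) (n : nat) : n.-tuple R := [tuple (0 : R) | i < n].
Definition tadd (R : realType) (n : nat) (x y : n.-tuple R) : n.-tuple R :=
  [tuple tnth x i + tnth y i | i < n].

Fixpoint iter_box_int (R : realType) (n : nat) (l : 'I_n -> R) (js : seq 'I_n)
    (x : 'I_n -> R) (g : ('I_n -> R) -> \bar R) : \bar R :=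
  match js with
  | [::] => g x
  | j :: js' =>
      (\int[@lebesgue_measure R]_(t in `[(- l j)%R, (l j)%R]%classic)
         iter_box_int l js' (fun k => if k == j then t else x k) g)%E
  end.

(* Integral over the face {x_i = s} of the box I(l) = prod_i [-l_i, l_i],
   w.r.t. (n-1)-dimensional Lebesgue (surface) measure on that face. *)
Definition face_int (R : realType) (n : nat) (l : 'I_n -> R) (i : 'I_n) (s : R)
    (g : ('I_n -> R) -> \bar R) : \bar R :=
  iter_box_int l [seq j <- enum 'I_n | j != i] (fun k => if k == i then s else 0) g.

Definition boundary_int (R : realType) (n : nat) (l : 'I_n -> R)
    (g : ('I_n -> R) -> \bar R) : \bar R :=
  (\sum_(i < n) (face_int l i (l i) g + face_int l i (- l i) g))%E.

Definition boundary_area (R : realType) (n : nat) (l : 'I_n -> R) : R :=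
  \sum_(i < n) 2 * \prod_(j < n | j != i) (2 * l j).

Definition boundary_avg (R : realType) (n : nat) (dO : measure_display)
    (Omega : measurableType dO) (theta : n.-tuple R -> Omega -> Omega)
    (vhat : Omega -> R) (l : 'I_n -> R) (omega : Omega) : \bar R :=
  ((boundary_area l)^-1%:E *
   boundary_int l (fun x => (`| vhat (theta [tuple x i | i < n] omega) |)%:E))%E.

From HB Require Import structures.
From mathcomp Require Import all_boot all_order all_algebra.
From mathcomp Require Import all_classical all_reals all_analysis.
From mathcomp Require Import measurable_realfun.
From mathcomp Require Import ring lra.

(** Stationarity and Tonelli give E[A_r] <= E|vhat| for the boundary averages
    A_r of |v| over the cubes of side 2(r+1): each point of the boundary
    contributes E|vhat(theta_x .)| = E|vhat|.  By Fatou's lemma the liminf of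
    A_r has finite expectation, hence is finite almost surely, and along a
    subsequence of radii realising this liminf the averages stay bounded. *)

Set Implicit Arguments.
Unset Strict Implicit.
Unset Printing Implicit Defensive.

Import Order.TTheory GRing.Theory Num.Theory.
Local Open Scope classical_set_scope.
Local Open Scope ring_scope.

Lemma lebesgue_measure_itvNr (R : realType) (r : R) : 0 <= r ->
  (lebesgue_measure `[(- r)%R, r]%classic = (2 * r)%:E)%E.
Proof.
move=> r0; rewrite lebesgue_measure_itv /= lte_fin.
case: ltP => [_ | r_le]; last by congr EFin; lra.
by rewrite opprK -EFinD; congr EFin; lra.
Qed.

Lemma measurable_patch_snd (R : realType) dT (T : measurableType dT)
    (D : set R) (F : T -> R -> \bar R) : measurable D ->
  measurable_fun setT (fun z : T * R => F z.1 z.2) ->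
  measurable_fun setT (fun z : T * R => (F z.1 \_ D) z.2).
Proof.
move=> mD mF.
have -> : (fun z : T * R => (F z.1 \_ D) z.2) =
          (fun z => F z.1 z.2 * (\1_D z.2 : R)%:E)%E.
  apply/funext => -[x t] /=; rewrite /patch indicE.
  by case: ifP => _; rewrite ?mule1 ?mule0.
apply: emeasurable_funM => //.
by apply/measurable_EFinP; apply: measurableT_comp.
Qed.

Lemma limn_einf_fin_num_subseq (R : realType) (u : nat -> \bar R) :
  limn_einf u \is a fin_num ->
  exists M : R, exists phi : nat -> nat,
    (forall r, r <= phi r)%N /\ forall r, (u (phi r) <= M%:E)%E.
Proof.
rewrite limn_einf_lim => u_fin.
have u_lim := cvg_lim (@ereal_hausdorff R) (@cvg_einfs_sup R u).
suff /choice[phi phiP] : forall m, exists k, (m <= k)%N /\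
    (u k <= (fine (limn (einfs u)) + 1)%:E)%E.
  by exists (fine (limn (einfs u)) + 1), phi; split => r; case: (phiP r).
move=> m.
have einfs_le : (einfs u m <= limn (einfs u))%E.
  by rewrite u_lim; apply: ereal_sup_ubound; exists m.
have : (einfs u m < (fine (limn (einfs u)) + 1)%:E)%E.
  by apply: (le_lt_trans einfs_le); rewrite -{1}(fineK u_fin) lte_fin; lra.
by move=> /ereal_inf_lt[_ [k /= mk <-] /ltW]; exists k.
Qed.

Lemma natr_cvgy_of_ge_id (R : realType) (phi : nat -> nat) :
  (forall r, r <= phi r)%N -> (fun r => (phi r)%:R : R) @ \oo --> +oo.
Proof.
move=> phi_ge; apply: (ger_cvgy _ (@cvgr_idn R)).
by apply: nearW => r; rewrite ler_nat.
Qed.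

Section fatou_ae.
Variables (d : measure_display) (T : measurableType d) (R : realType).
Variables (mu : {measure set T -> \bar R}) (A : nat -> T -> \bar R) (c : R).
Hypotheses (A_meas : forall r, measurable_fun setT (A r))
  (A_ge0 : forall r w, (0 <= A r w)%E)
  (A_int_le : forall r, (\int[mu]_w A r w <= c%:E)%E).

Lemma ae_limn_einf_fin_num :
  {ae mu, forall w, limn_einf (A ^~ w) \is a fin_num}.
Proof.
pose F w := limn_einf (A ^~ w).
have FE : F = fun w => limn (einfs (A ^~ w)).
  by apply/funext => w; rewrite /F limn_einf_lim.
have F_ge0 w : (0 <= F w)%E.
  rewrite FE; apply: lime_ge; first exact: is_cvg_einfs.
  by apply: nearW => m; apply: le_ereal_inf_tmp => _ [k /= _ <-].
have F_meas : measurable_fun setT F.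
  rewrite FE; apply: (emeasurable_fun_cvg (fun m w => einfs (A ^~ w) m)).
    exact: measurable_fun_einfs.
  by move=> w _; exact: is_cvg_einfs.
have F_int_le : (\int[mu]_w F w <= c%:E)%E.
  apply: (le_trans (fatou mu measurableT A_meas (fun r w _ => A_ge0 r w))).
  rewrite limn_einf_lim; apply: lime_le; first exact: is_cvg_einfs.
  apply: nearW => m; apply: (le_trans (ereal_inf_lbound _)); last exact: A_int_le.
  by exists m => /=.
have F_int : mu.-integrable setT F.
  apply/integrableP; split => //.
  under eq_integral do rewrite gee0_abs //.
  exact: (le_lt_trans F_int_le (ltry _)).
by apply: filterS (integrable_ae measurableT F_int) => w /(_ I).
Qed.

End fatou_ae.

(* ['I_n -> R] carries no sigma-algebra here, so joint measurability of
   [G] is expressed through measurable substitutions; in this form it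
   survives integrating out one coordinate of [x]. *)
Definition param_measurable (R : realType) (n : nat) (dO : measure_display)
    (Omega : measurableType dO) (G : Omega -> ('I_n -> R) -> \bar R) :=
  forall dT (T : measurableType dT) (a : T -> Omega) (u : T -> 'I_n -> R),
    measurable_fun setT a -> (forall k, measurable_fun setT (u ^~ k)) ->
    measurable_fun setT (fun t => G (a t) (u t)).

Section box_integrals.
Variables (R : realType) (n : nat) (l : 'I_n -> R).

Lemma iter_box_int_ge0 js x (g : ('I_n -> R) -> \bar R) :
  (forall y, (0 <= g y)%E) -> (0 <= iter_box_int l js x g)%E.
Proof.
move=> g0; elim: js x => [|j js IH] x /=; first exact: g0.
by apply: integral_ge0 => t _; exact: IH.
Qed.

Lemma boundary_int_ge0 (g : ('I_n -> R) -> \bar R) :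
  (forall y, (0 <= g y)%E) -> (0 <= boundary_int l g)%E.
Proof.
move=> g0; apply: sume_ge0 => i _.
by apply: adde_ge0; exact: iter_box_int_ge0.
Qed.

Lemma boundary_area_ge0 : (forall j, 0 <= l j) -> 0 <= boundary_area l.
Proof.
move=> l0; apply: sumr_ge0 => i _; apply: mulr_ge0 => //.
by apply: prodr_ge0 => j _; apply: mulr_ge0.
Qed.

Variables (dO : measure_display) (Omega : measurableType dO).
Variable G : Omega -> ('I_n -> R) -> \bar R.
Hypotheses (G_meas : param_measurable G) (G_ge0 : forall w y, (0 <= G w y)%E).

Lemma measurable_iter_box_int js dT (T : measurableType dT)
    (a : T -> Omega) (u : T -> 'I_n -> R) :
  measurable_fun setT a -> (forall k, measurable_fun setT (u ^~ k)) ->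
  measurable_fun setT (fun t => iter_box_int l js (u t) (G (a t))).
Proof.
elim: js dT T a u => [|j js IH] dT T a u ma mu /=; first exact: G_meas.
pose F s t := iter_box_int l js (fun k => if k == j then t else u s k) (G (a s)).
have F_meas : measurable_fun setT (fun z : T * R => F z.1 z.2).
  apply: IH; first exact: measurableT_comp.
  move=> k /=; case: (k == j); first exact: measurable_snd.
  exact: measurableT_comp (mu k) measurable_fst.
have Fp_ge0 (z : T * R) : (0 <= (F z.1 \_ `[(- l j)%R, (l j)%R]) z.2)%E.
  by rewrite /patch; case: ifP => _ //; exact: iter_box_int_ge0.
have := measurable_fun_fubini_tonelli_F (m2 := lebesgue_measure)
  (fun z : T * R => (F z.1 \_ `[(- l j)%R, (l j)%R]) z.2).
move=> /(_ (measurable_patch_snd (measurable_itv _) F_meas) Fp_ge0).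
by apply: eq_measurable_fun => t _; rewrite integral_mkcond.
Qed.

Lemma measurable_face_int i s :
  measurable_fun setT (fun w => face_int l i s (G w)).
Proof. exact: (measurable_iter_box_int _ (a := id) (u := fun=> _)). Qed.

Lemma measurable_boundary_int : measurable_fun setT (fun w => boundary_int l (G w)).
Proof.
apply: emeasurable_sum => i.
by apply: emeasurable_funD; exact: measurable_face_int.
Qed.

Variables (P : {sigma_finite_measure set Omega -> \bar R}) (c : R).
Hypotheses (G_int : forall x, (\int[P]_w G w x = c%:E)%E)
  (l_ge0 : forall j, 0 <= l j).

Lemma integral_iter_box_int js x :
  (\int[P]_w iter_box_int l js x (G w) = (\prod_(j <- js) (2 * l j) * c)%:E)%E.
Proof.
elim: js x => [|j js IH] x /=; first by rewrite big_nil mul1r.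
pose F w t := iter_box_int l js (fun k => if k == j then t else x k) (G w).
pose f (z : Omega * R) := (F z.1 \_ `[(- l j)%R, (l j)%R]) z.2.
have f_meas : measurable_fun setT f.
  apply: measurable_patch_snd => //.
  apply: (measurable_iter_box_int _ measurable_fst) => k /=.
  by case: (k == j); [exact: measurable_snd | exact: measurable_cst].
have f_ge0 z : (0 <= f z)%E.
  by rewrite /f /patch; case: ifP => _ //; exact: iter_box_int_ge0.
transitivity (\int[P]_w \int[lebesgue_measure]_t f (w, t))%E.
  by apply: eq_integral => w _; rewrite integral_mkcond.
rewrite (@fubini_tonelli _ _ _ _ _ P lebesgue_measure f f_meas f_ge0).
transitivity (\int[lebesgue_measure]_(t in `[(- l j)%R, (l j)%R])
                (\prod_(k <- js) (2 * l k) * c)%:E)%E.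
  rewrite [RHS]integral_mkcond; apply: eq_integral => t _.
  rewrite /f /patch /=; case: ifP => _; first exact: IH.
  exact: integral0.
rewrite integral_cst // [X in (_ * X)%E]lebesgue_measure_itvNr // -EFinM big_cons.
by congr EFin; ring.
Qed.

Lemma integral_face_int i s :
  (\int[P]_w face_int l i s (G w) = (\prod_(j < n | j != i) (2 * l j) * c)%:E)%E.
Proof. by rewrite integral_iter_box_int big_filter big_enum_cond. Qed.

Lemma integral_boundary_avg_le : 0 <= c ->
  (\int[P]_w ((boundary_area l)^-1%:E * boundary_int l (G w)) <= c%:E)%E.
Proof.
move=> c0.
have face_ge0 i s w : (0 <= face_int l i s (G w))%E by exact: iter_box_int_ge0.
rewrite ge0_integralZl_EFin //; last 3 first.
- by move=> w _; exact: boundary_int_ge0.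
- exact: measurable_boundary_int.
- by rewrite invr_ge0 boundary_area_ge0.
have int_boundary : (\int[P]_w boundary_int l (G w) = (boundary_area l * c)%:E)%E.
  rewrite ge0_integral_sum //; last 2 first.
  - by move=> i; apply: emeasurable_funD; exact: measurable_face_int.
  - by move=> i w _; exact: adde_ge0.
  rewrite /boundary_area mulr_suml -sumEFin; apply: eq_bigr => i _.
  rewrite ge0_integralD //; try exact: measurable_face_int.
  by rewrite !integral_face_int -EFinD; congr EFin; ring.
rewrite int_boundary -EFinM lee_fin mulrA.
have [->|area_neq0] := eqVneq (boundary_area l) 0; first by rewrite invr0 !mul0r.
by rewrite mulVf // mul1r.
Qed.

End box_integrals.

Section stationary_shift.
Variables (R : realType) (n : nat) (dO : measure_display) (Omega : measurableType dO).
Variable theta : n.-tuple R -> Omega -> Omega.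
Hypothesis theta_meas :
  measurable_fun setT (fun p : (n.-tuple R * Omega)%type => theta p.1 p.2).
Variable h : Omega -> \bar R.
Hypothesis h_meas : measurable_fun setT h.

Lemma param_measurable_shift :
  param_measurable (fun w (x : 'I_n -> R) => h (theta [tuple x i | i < n] w)).
Proof.
move=> dT T a u ma mu; apply: (measurableT_comp h_meas).
have tuple_meas : measurable_fun setT (fun t => [tuple u t i | i < n]).
  apply/measurable_fun_tnthP => i.
  by apply: eq_measurable_fun (mu i) => t _ /=; rewrite tnth_mktuple.
exact: measurableT_comp theta_meas (measurable_fun_pair tuple_meas ma).
Qed.

Variable P : {measure set Omega -> \bar R}.
Hypothesis P_inv : forall x (A : set Omega), measurable A ->
  P (theta x @^-1` A) = P A.
Hypothesis h_ge0 : forall w, (0 <= h w)%E.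

Lemma integral_shift x : (\int[P]_w h (theta x w) = \int[P]_w h w)%E.
Proof.
have shift_meas : measurable_fun setT (theta x).
  exact: measurable_fun_pair2 theta_meas.
have := ge0_integral_pushforward shift_meas P measurableT h_meas (fun w _ => h_ge0 w).
rewrite preimage_setT => <-.
by apply: eq_measure_integral => A mA _; exact: P_inv.
Qed.

End stationary_shift.

Theorem proposition3p3 (R : realType) (d : nat) (dO : measure_display)
    (Omega : measurableType dO) (P : probability Omega R)
    (theta : (2 * d)%N.-tuple R -> Omega -> Omega)
    (theta_meas : measurable_fun setT
       (fun p : ((2 * d)%N.-tuple R * Omega)%type => theta p.1 p.2))
    (theta0 : forall omega, theta (tzero R (2 * d)) omega = omega)
    (thetaD : forall x y omega, theta (tadd x y) omega = theta x (theta y omega))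
    (P_inv : forall x (A : set Omega), measurable A ->
       P (theta x @^-1` A) = P A)
    (vhat : Omega -> R)
    (vhat_meas : measurable_fun setT vhat)
    (vhat_int : P.-integrable setT (EFin \o vhat)) :
  {ae P, forall omega : Omega,
    exists l : nat -> 'I_(2 * d) -> R,
      (forall r i, 0 < l r i) /\
      (forall i, (fun r => l r i) @ \oo --> +oo) /\
      exists M : R, forall r, (boundary_avg theta vhat (l r) omega <= M%:E)%E}.
Proof.
pose h w := (`|vhat w|)%:E.
have h_meas : measurable_fun setT h by apply/measurable_EFinP; exact: measurableT_comp.
have h_ge0 w : (0 <= h w)%E by rewrite lee_fin.
pose G w (x : 'I_(2 * d) -> R) := h (theta [tuple x i | i < (2 * d)%N] w).
have G_meas : param_measurable G by exact: param_measurable_shift.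
have G_ge0 w x : (0 <= G w x)%E by exact: h_ge0.
have [c c_ge0 G_int] : exists2 c : R, 0 <= c & forall x, (\int[P]_w G w x = c%:E)%E.
  have /integrableP[_ h_fin] := vhat_int.
  exists (fine (\int[P]_w h w)); first by rewrite fine_ge0 // integral_ge0.
  by move=> x; rewrite integral_shift // fineK // ge0_fin_numE // integral_ge0.
pose A r := boundary_avg theta vhat (fun=> r.+1%:R).
have A_ge0 r w : (0 <= A r w)%E.
  by rewrite mule_ge0 ?boundary_int_ge0 // lee_fin invr_ge0 boundary_area_ge0.
have A_meas r : measurable_fun setT (A r).
  exact/measurable_funeM/(measurable_boundary_int _ G_meas G_ge0).
have A_int_le r : (\int[P]_w A r w <= c%:E)%E.
  exact: (integral_boundary_avg_le G_meas G_ge0 G_int).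
apply: filterS (ae_limn_einf_fin_num A_meas A_ge0 A_int_le) => w /limn_einf_fin_num_subseq[M [phi [phi_ge A_le]]].
exists (fun r _ => (phi r).+1%:R); split => //; split => [i|]; last by exists M.
by apply: natr_cvgy_of_ge_id => r; exact: leqW.
Qed.
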